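(* The abelian group $\ell^\infty(\mathbb{Z})_S$ is torsion-free: if $a,c\in\ell^\infty(\mathbb{Z})$ and $n\ge1$ satisfy $na=c-Sc$, then $a=c'-Sc'$ for some $c'\in\ell^\infty(\mathbb{Z})$.
   Context: $\ell^\infty(\mathbb{Z})$ denotes the abelian group of bounded integer-valued sequences $(a_j)_{j\in\mathbb{Z}}$, $S(a_j)_j=(a_{j+1})_j$ is the shift, and $\ell^\infty(\mathbb{Z})_S=\ell^\infty(\mathbb{Z})/\{a-Sa: a\in\ell^\infty(\mathbb{Z})\}$. *)

From Stdlib Require Import ZArith.
Open Scope Z_scope.

Definition bounded_seq (a : Z -> Z) : Prop :=
  exists M : Z, forall j : Z, Z.abs (a j) <= M.

Definition seq_shift (a : Z -> Z) : Z -> Z := fun j => a (j + 1).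

From Stdlib Require Import ZArith Lia.
Open Scope Z_scope.

(* Suppose n >= 1 and n * a = c - S c with c bounded.  Then
   c (j+1) = c j - n * a j, so the residue of c j modulo n does not depend
   on j.  Writing c j = n * (c j / n) + r with this common residue r, the
   residues cancel in c j - c (j+1), giving
   n * a j = n * (c j / n - c (j+1) / n); cancelling n shows that
   c' := c / n (termwise Euclidean quotient) satisfies a = c' - S c'.
   Finally c' is bounded because |x / n| <= |x| for n >= 1. *)

Lemma abs_div_le (x n : Z) : 1 <= n -> Z.abs (x / n) <= Z.abs x.
Proof.
  intros Hn.
  pose proof (Z.div_mod x n ltac:(lia)) as Hdiv.
  pose proof (Z.mod_pos_bound x n ltac:(lia)) as Hmod.
  remember (x / n) as q; remember (x mod n) as r.
  destruct (Z.abs_spec q) as [[? ->]|[? ->]];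
    destruct (Z.abs_spec x) as [[? ->]|[? ->]]; nia.
Qed.

Lemma bounded_seq_div (c : Z -> Z) (n : Z) :
  1 <= n -> bounded_seq c -> bounded_seq (fun j => c j / n).
Proof.
  intros Hn [M HM]. exists M. intros j.
  eapply Z.le_trans; [apply abs_div_le; exact Hn | apply HM].
Qed.

Lemma sub_eq_mul_div_sub (x y n : Z) :
  n <> 0 -> x mod n = y mod n -> x - y = n * (x / n - y / n).
Proof.
  intros Hn Hmod.
  pose proof (Z.div_mod x n Hn). pose proof (Z.div_mod y n Hn). lia.
Qed.

Lemma shift_invariant_const {A : Type} (f : Z -> A) :
  (forall j, f (j + 1) = f j) -> forall j, f j = f 0.
Proof.
  intros Hstep j. induction j using Z.peano_ind.
  - reflexivity.
  - rewrite <- Z.add_1_r, Hstep. exact IHj.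
  - rewrite <- IHj, <- (Hstep (Z.pred j)). f_equal. lia.
Qed.

Lemma coboundary_mod_const (a c : Z -> Z) (n : Z) :
  n <> 0 -> (forall j, n * a j = c j - seq_shift c j) ->
  forall j, c j mod n = c 0 mod n.
Proof.
  intros Hn Hcob. apply (shift_invariant_const (fun j => c j mod n)).
  intros j. unfold seq_shift in Hcob.
  replace (c (j + 1)) with (c j + (- a j) * n) by (specialize (Hcob j); lia).
  apply Z.mod_add. exact Hn.
Qed.

Theorem lemma5p2 (a c : Z -> Z) (n : Z) :
  bounded_seq a -> bounded_seq c -> 1 <= n ->
  (forall j : Z, n * a j = c j - seq_shift c j) ->
  exists c' : Z -> Z, bounded_seq c' /\ (forall j : Z, a j = c' j - seq_shift c' j).
Proof.
  intros _ Hc Hn Hcob.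
  exists (fun j => c j / n). split.
  - exact (bounded_seq_div c n Hn Hc).
  - intros j. unfold seq_shift.
    assert (Hn0 : n <> 0) by lia.
    assert (Hres : c j mod n = c (j + 1) mod n).
    { now rewrite (coboundary_mod_const a c n Hn0 Hcob j),
                  (coboundary_mod_const a c n Hn0 Hcob (j + 1)). }
    pose proof (sub_eq_mul_div_sub (c j) (c (j + 1)) n Hn0 Hres) as Hdiff.
    specialize (Hcob j). unfold seq_shift in Hcob.
    apply (Z.mul_reg_l _ _ n); lia.
Qed.
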